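(* Let $(\Lambda,d)$ be a $k$-graph. Suppose $x,y\in\Lambda^{\le\infty}$ and $p,q\in\mathbb{N}^k$ satisfy $p\le d(x)$, $q\le d(y)$ and $\sigma^p x=\sigma^q y$. Then for all $a,b\in\mathbb{N}^k$ with $a\le b$ and $b+p\not\le d(x)$, we have $b+q\not\le d(y)$ and $(x;(a+p,b+p))\sim(y;(a+q,b+q))$, i.e. $[x;(a+p,b+p)]=[y;(a+q,b+q)]$.
   Context: A $k$-graph $(\Lambda,d)$ is a countable category with a degree functor $d:\Lambda\to\mathbb{N}^k$ satisfying the unique factorization property (if $d(\lambda)=m+n$ there are unique $\mu,\nu$ with $\lambda=\mu\nu$, $d(\mu)=m$, $d(\nu)=n$); $\Lambda^0$ is the vertex set (identity morphisms), $r,s$ range and source, $v\Lambda^n=\{\lambda:r(\lambda)=v,d(\lambda)=n\}$; $e_i$ standard basis, $\le$ coordinatewise, $\vee,\wedge$ coordinatewise max/min (also on $(\mathbb{N}\cup\{\infty\})^k$). For $m\in(\mathbb{N}\cup\{\infty\})^k$, $\Omega_{k,m}$ is the $k$-graph with objects $\{p\in\mathbb{N}^k:p\le m\}$, morphisms pairs $(p,q)$ with $p\le q\le m$, $r(p,q)=p$, $s(p,q)=q$, $d(p,q)=q-p$, $(p,q)(q,u)=(p,u)$. A graph morphism $x:\Omega_{k,m}\to\Lambda$ is a degree-preserving functor; write $d(x)=m$, $x(a,b)$ for $x((a,b))$ and $x(a)=x(a,a)$. It is a boundary path if there is $n_x\in\mathbb{N}^k$, $n_x\le d(x)$, such that whenever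 $p\in\mathbb{N}^k$, $n_x\le p\le d(x)$ and $p_i=d(x)_i$, we have $x(p)\Lambda^{e_i}=\emptyset$; $\Lambda^{\le\infty}$ is the set of boundary paths. For $p\in\mathbb{N}^k$, $p\le d(x)$, $\sigma^p x:\Omega_{k,d(x)-p}\to\Lambda$ is $\sigma^px(a,b)=x(a+p,b+p)$. Let $P_\Lambda=\{(x;(m,n)):x\in\Lambda^{\le\infty},\ m,n\in\mathbb{N}^k,\ m\le n,\ n\not\le d(x)\}$, and define $(x;(m,n))\sim(y;(p,q))$ iff (P1) $x(m\wedge d(x),n\wedge d(x))=y(p\wedge d(y),q\wedge d(y))$, (P2) $m-m\wedge d(x)=p-p\wedge d(y)$, (P3) $n-m=q-p$. This is an equivalence relation; $[x;(m,n)]$ denotes the class of $(x;(m,n))$. *)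

From mathcomp Require Import all_boot.
Set Implicit Arguments.
Unset Strict Implicit.
Unset Printing Implicit Defensive.

(* N^k as functions 'I_k -> nat; (N u {oo})^k as functions 'I_k -> option nat
   (None = infinity). *)
Definition vec (k : nat) := 'I_k -> nat.
Definition evec (k : nat) := 'I_k -> option nat.

Definition veq k (a b : vec k) : Prop := forall i, a i = b i.
Definition vle k (a b : vec k) : Prop := forall i, a i <= b i.
Definition vadd k (a b : vec k) : vec k := fun i => a i + b i.
Definition vsub k (a b : vec k) : vec k := fun i => a i - b i.
Definition vzero (k : nat) : vec k := fun _ => 0.
Definition vunit (k : nat) (j : 'I_k) : vec k := fun i => if i == j then 1 else 0.
Arguments vzero : clear implicits.
Arguments vunit : clear implicits.

Definition vleE k (a : vec k) (m : evec k) : Prop :=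
  forall i, match m i with None => true | Some n => a i <= n end.
Definition vminE k (a : vec k) (m : evec k) : vec k :=
  fun i => match m i with None => a i | Some n => minn (a i) n end.
Definition esub k (m : evec k) (p : vec k) : evec k :=
  fun i => match m i with None => None | Some n => Some (n - p i) end.

(* A k-graph: a countable category with a degree functor satisfying
   the unique factorization property. comp mu nu is the composite mu nu
   (first nu then mu, so s (mu nu) = s nu and r (mu nu) = r mu); it is only
   meaningful when s mu = r nu. *)
Record kgraph (k : nat) := KGraph {
  Obj : countType;
  Mor : countType;
  src : Mor -> Obj;
  rng : Mor -> Obj;
  idm : Obj -> Mor;
  comp : Mor -> Mor -> Mor;
  deg : Mor -> vec k;
  src_id : forall v, src (idm v) = v;
  rng_id : forall v, rng (idm v) = v;
  src_comp : forall mu nu, src mu = rng nu -> src (comp mu nu) = src nu;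
  rng_comp : forall mu nu, src mu = rng nu -> rng (comp mu nu) = rng mu;
  comp_idl : forall mu, comp (idm (rng mu)) mu = mu;
  comp_idr : forall mu, comp mu (idm (src mu)) = mu;
  comp_assoc : forall la mu nu, src la = rng mu -> src mu = rng nu ->
      comp la (comp mu nu) = comp (comp la mu) nu;
  deg_id : forall v, veq (deg (idm v)) (vzero k);
  deg_comp : forall mu nu, src mu = rng nu ->
      veq (deg (comp mu nu)) (vadd (deg mu) (deg nu));
  factorization : forall la (m n : vec k), veq (deg la) (vadd m n) ->
      exists mu nu, [/\ src mu = rng nu, la = comp mu nu,
                        veq (deg mu) m & veq (deg nu) n];
  factorization_uniq : forall mu nu mu' nu' (m n : vec k),
      src mu = rng nu -> src mu' = rng nu' ->
      comp mu nu = comp mu' nu' ->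
      veq (deg mu) m -> veq (deg nu) n -> veq (deg mu') m -> veq (deg nu') n ->
      mu = mu' /\ nu = nu'
}.

Arguments src {k} _ _.
Arguments rng {k} _ _.
Arguments idm {k} _ _.
Arguments comp {k} _ _ _.
Arguments deg {k} _ _.

(* Data of a map Omega_{k,m} -> Lambda: its degree m = d(x) and its action
   (a,b) |-> x(a,b) on morphisms (values outside a <= b <= m are irrelevant).
   The object p of Omega_{k,m} is identified with its identity (p,p), and the
   functor sends it to the vertex rng (x(p,p)). *)
Record gmap k (L : kgraph k) := GMap {
  gdeg : evec k;
  gmor : vec k -> vec k -> Mor L
}.

Definition is_graph_morphism k (L : kgraph k) (x : gmap L) : Prop :=
  (forall p, vleE p (gdeg x) ->
     gmor x p p = idm L (rng L (gmor x p p))) /\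
  (forall p q, vle p q -> vleE q (gdeg x) ->
     rng L (gmor x p q) = rng L (gmor x p p) /\
     src L (gmor x p q) = rng L (gmor x q q) /\
     veq (deg L (gmor x p q)) (vsub q p)) /\
  (forall p q u, vle p q -> vle q u -> vleE u (gdeg x) ->
     comp L (gmor x p q) (gmor x q u) = gmor x p u).

Definition no_edge_from k (L : kgraph k) (v : Mor L) (i : 'I_k) : Prop :=
  ~ exists la : Mor L, rng L la = rng L v /\ veq (deg L la) (vunit k i).

Definition is_boundary_path k (L : kgraph k) (x : gmap L) : Prop :=
  is_graph_morphism x /\
  exists nx : vec k, vleE nx (gdeg x) /\
    forall p : vec k, vle nx p -> vleE p (gdeg x) ->
      forall i : 'I_k, gdeg x i = Some (p i) -> no_edge_from (gmor x p p) i.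

Definition shift k (L : kgraph k) (p : vec k) (x : gmap L) : gmap L :=
  GMap (esub (gdeg x) p) (fun a b => gmor x (vadd a p) (vadd b p)).

Definition gmap_eq k (L : kgraph k) (x y : gmap L) : Prop :=
  (forall i, gdeg x i = gdeg y i) /\
  forall a b, vle a b -> vleE b (gdeg x) -> gmor x a b = gmor y a b.

Definition in_PL k (L : kgraph k) (x : gmap L) (m n : vec k) : Prop :=
  is_boundary_path x /\ vle m n /\ ~ vleE n (gdeg x).

Definition prel k (L : kgraph k) (x : gmap L) (m n : vec k)
    (y : gmap L) (p q : vec k) : Prop :=
  gmor x (vminE m (gdeg x)) (vminE n (gdeg x))
    = gmor y (vminE p (gdeg y)) (vminE q (gdeg y)) /\
  veq (vsub m (vminE m (gdeg x))) (vsub p (vminE p (gdeg y))) /\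
  veq (vsub n m) (vsub q p).

(* Translating by p identifies Omega_{k,d(x)-p} with the part of Omega_{k,d(x)}
   above p, and truncation commutes with this translation:
   (a+p) /\ d(x) = (a /\ (d(x)-p)) + p whenever p <= d(x).  Hence, with
   m := d(x)-p = d(y)-q, both pairs in the relation are read off the common
   shift sigma^p x = sigma^q y at (a /\ m, b /\ m), and all differences are
   unchanged by the translations. *)
From mathcomp Require Import all_boot.
From mathcomp Require Import zify.
From Stdlib Require Import FunctionalExtensionality.

Section Vectors.

Context {k : nat}.
Implicit Types (a b p : vec k) (m : evec k).

Lemma vec_ext a b : veq a b -> a = b.
Proof. exact: functional_extensionality. Qed.

Lemma vsub_vadd2r a b p : veq (vsub (vadd a p) (vadd b p)) (vsub a b).
Proof. by move=> i; rewrite /vsub /vadd subnDr. Qed.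

Lemma vleE_vaddr {p m} a : vleE p m -> vleE (vadd a p) m <-> vleE a (esub m p).
Proof.
move=> hp; split=> ha i; move: (hp i) (ha i); rewrite /esub /vadd.
all: by case: (m i) => // n; lia.
Qed.

Lemma vminE_vaddr {p m} a :
  vleE p m -> vminE (vadd a p) m = vadd (vminE a (esub m p)) p.
Proof.
move=> hp; apply: vec_ext => i; move: (hp i).
by rewrite /vminE /esub /vadd; case: (m i) => // n; lia.
Qed.

Lemma vminE_le a m : vleE (vminE a m) m.
Proof. by move=> i; rewrite /vminE; case: (m i) => // n; exact: geq_minr. Qed.

Lemma vminE_mono a b m : vle a b -> vle (vminE a m) (vminE b m).
Proof.
move=> hab i; move: (hab i); rewrite /vminE.
by case: (m i) => // n; lia.
Qed.

End Vectors.

Lemma gmap_eq_gdeg {k} {L : kgraph k} {x y : gmap L} :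
  gmap_eq x y -> gdeg x = gdeg y.
Proof. by case=> hdeg _; exact: functional_extensionality. Qed.

Theorem proposition3p10 (k : nat) (L : kgraph k) (x y : gmap L) (p q : vec k) :
  is_boundary_path x -> is_boundary_path y ->
  vleE p (gdeg x) -> vleE q (gdeg y) ->
  gmap_eq (shift p x) (shift q y) ->
  forall a b : vec k, vle a b -> ~ vleE (vadd b p) (gdeg x) ->
    ~ vleE (vadd b q) (gdeg y) /\
    prel x (vadd a p) (vadd b p) y (vadd a q) (vadd b q).
Proof.
move=> _ _ hp hq hxy a b hab hb.
have hm : esub (gdeg x) p = esub (gdeg y) q := gmap_eq_gdeg hxy.
split.
  by rewrite (vleE_vaddr _ hq) -hm -(vleE_vaddr _ hp).
rewrite /prel !(vminE_vaddr _ hp) !(vminE_vaddr _ hq) -hm.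
set m := esub (gdeg x) p.
split; last split.
- case: hxy => _ hval; apply: (hval (vminE a m) (vminE b m)).
    exact: vminE_mono.
  exact: vminE_le.
- by move=> i; rewrite !vsub_vadd2r.
- by move=> i; rewrite !vsub_vadd2r.
Qed.
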